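(* Let $\alpha,\beta\in\mathbb{R}$ with $\alpha\neq 0$, and let $G_1$ be the connected, simply connected Lie group whose Lie algebra $\mathfrak{g}_1$ has a basis $\{e_1,e_2,e_3\}$ with $[e_1,e_2]=\alpha e_1-\beta e_3$, $[e_1,e_3]=-\alpha e_1-\beta e_2$, $[e_2,e_3]=\beta e_1+\alpha e_2+\alpha e_3$, equipped with the left-invariant Lorentzian metric $g$ for which $\{e_1,e_2,e_3\}$ is pseudo-orthonormal with $e_3$ timelike. Let $\lambda_0, c\in\mathbb{R}$. Then there exists a derivation $D$ of $\mathfrak{g}_1$ with $\mathrm{Ric}=(s\lambda_0+c)\mathrm{Id}+D$ (i.e. $(G_1,g)$ is an algebraic Schouten soliton associated to the Levi-Civita connection) if and only if $\beta=0$ and $c=0$.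
   Context: Pseudo-orthonormal means $g(e_1,e_1)=g(e_2,e_2)=1$, $g(e_3,e_3)=-1$, $g(e_i,e_j)=0$ for $i\neq j$; left-invariant tensors are identified with their values on $\mathfrak{g}$. $\nabla$ is the Levi-Civita connection of $g$, with curvature $R(X,Y)Z=\nabla_X\nabla_YZ-\nabla_Y\nabla_XZ-\nabla_{[X,Y]}Z$. The Ricci tensor is $\rho(X,Y)=-g(R(X,e_1)Y,e_1)-g(R(X,e_2)Y,e_2)+g(R(X,e_3)Y,e_3)$, the Ricci operator $\mathrm{Ric}$ is defined by $\rho(X,Y)=g(\mathrm{Ric}(X),Y)$, and the scalar curvature is $s=\rho(e_1,e_1)+\rho(e_2,e_2)-\rho(e_3,e_3)$. A derivation of $\mathfrak{g}$ is a linear map $D:\mathfrak{g}\to\mathfrak{g}$ with $D[X,Y]=[DX,Y]+[X,DY]$ for all $X,Y\in\mathfrak{g}$. $(G,g)$ is called an algebraic Schouten soliton associated to $\nabla$ (with real constants $\lambda_0$, $c$) if $\mathrm{Ric}=(s\lambda_0+c)\mathrm{Id}+D$ for some derivation $D$. *)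

(* The Lie algebra g_1 = R^3 with basis e_0,e_1,e_2
   (= e_1,e_2,e_3 of the paper), vectors are row vectors 'rV[R]_3,
   linear maps are matrices acting on the right (X |-> X *m D). *)
From HB Require Import structures.
From mathcomp Require Import all_boot all_order all_algebra.
From mathcomp Require Import reals.
Set Implicit Arguments. Unset Strict Implicit. Unset Printing Implicit Defensive.
Import Order.TTheory GRing.Theory Num.Theory.
Local Open Scope ring_scope.

Section G1.
Variables (R : realType) (alpha beta : R).

Definition e (k : nat) : 'rV[R]_3 := \row_(j < 3) ((j : nat) == k)%:R.

Definition brb (i j : nat) : 'rV[R]_3 :=
  match i, j with
  | 0, 1 => alpha *: e 0 - beta *: e 2
  | 1, 0 => - (alpha *: e 0 - beta *: e 2)
  | 0, 2 => - alpha *: e 0 - beta *: e 1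
  | 2, 0 => - (- alpha *: e 0 - beta *: e 1)
  | 1, 2 => beta *: e 0 + alpha *: e 1 + alpha *: e 2
  | 2, 1 => - (beta *: e 0 + alpha *: e 1 + alpha *: e 2)
  | _, _ => 0
  end.

Definition br (X Y : 'rV[R]_3) : 'rV[R]_3 :=
  \sum_(i < 3) \sum_(j < 3) (X 0 i * Y 0 j) *: brb i j.

Definition eps (k : 'I_3) : R := if (k : nat) == 2%N then -1 else 1.

Definition g (X Y : 'rV[R]_3) : R := \sum_(k < 3) eps k * X 0 k * Y 0 k.

(* Levi-Civita connection on left-invariant fields (Koszul formula):
   2 g(nabla_X Y, Z) = g([X,Y],Z) - g([Y,Z],X) + g([Z,X],Y) *)
Definition nabla (X Y : 'rV[R]_3) : 'rV[R]_3 :=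
  \sum_(k < 3) (eps k / 2 * (g (br X Y) (e k) - g (br Y (e k)) X
                              + g (br (e k) X) Y)) *: e k.

Definition curv (X Y Z : 'rV[R]_3) : 'rV[R]_3 :=
  nabla X (nabla Y Z) - nabla Y (nabla X Z) - nabla (br X Y) Z.

Definition rho (X Y : 'rV[R]_3) : R :=
  \sum_(k < 3) - eps k * g (curv X (e k) Y) (e k).

(* Ricci operator: the unique Ric with rho(X,Y) = g(Ric X, Y) *)
Definition Ric (X : 'rV[R]_3) : 'rV[R]_3 :=
  \sum_(k < 3) (eps k * rho X (e k)) *: e k.

Definition scal : R := \sum_(k < 3) eps k * rho (e k) (e k).

Definition is_derivation (D : 'M[R]_3) : Prop :=
  forall X Y : 'rV[R]_3, br X Y *m D = br (X *m D) Y + br X (Y *m D).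

Definition alg_schouten_soliton (lambda0 c : R) : Prop :=
  exists D : 'M[R]_3, is_derivation D /\
    forall X : 'rV[R]_3, Ric X = (scal * lambda0 + c) *: X + X *m D.

End G1.

(** The Koszul formula gives the Levi-Civita
    connection, and its curvature gives a Ricci operator with constant matrix
    [ricci_mx] and scalar curvature [s = -3 beta^2 / 2].  Because
    [Ric = t Id + D] determines [D], the soliton condition says exactly that
    [Ric - t Id] is a derivation, where [t = s lambda0 + c].  Applying the
    derivation identity to [[e_1, e_2]] forces [alpha^2 beta = 0] and then
    [alpha t = 0].  Conversely, for [beta = 0] the Ricci operator is itself
    a derivation and [t = c]. *)

From HB Require Import structures.
From mathcomp Require Import all_boot all_order all_algebra.
From mathcomp Require Import reals ring lra.
Import Order.TTheory GRing.Theory Num.Theory.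
Local Open Scope ring_scope.

Local Notation i0 := (@Ordinal 3 0 isT).
Local Notation i1 := (@Ordinal 3 1 isT).
Local Notation i2 := (@Ordinal 3 2 isT).

Lemma big_ord3 (V : nmodType) (F : 'I_3 -> V) :
  \sum_(i < 3) F i = F i0 + F i1 + F i2.
Proof.
by rewrite !big_ord_recr big_ord0 /= add0r; congr (F _ + F _ + F _); exact: val_inj.
Qed.

Lemma ord3P (j : 'I_3) : [\/ j = i0, j = i1 | j = i2].
Proof.
by case: j => [[|[|[|//]]] ?]; [apply: Or31 | apply: Or32 | apply: Or33]; exact: val_inj.
Qed.

Section G1.
Context {R : realType} (a b : R).

Lemma schouten_soliton_iff_derivation (M : 'M[R]_3) (lambda0 c : R) :
  (forall X, Ric a b X = X *m M) ->
  alg_schouten_soliton a b lambda0 c <->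
  is_derivation a b (M - (scal a b * lambda0 + c)%:M).
Proof.
move=> RicM; set t := scal a b * lambda0 + c.
have shiftE (X : 'rV[R]_3) : X *m (M - t%:M) = X *m M - t *: X.
  by rewrite mulmxBr mul_mx_scalar.
split=> [[D [der RicD]] X Y | der].
  have DE (Z : 'rV[R]_3) : Z *m (M - t%:M) = Z *m D.
    by rewrite shiftE -RicM RicD addrC addKr.
  by rewrite !DE.
exists (M - t%:M); split=> // X.
by rewrite shiftE RicM addrC subrK.
Qed.

Local Notation x0 X := (X 0 i0).
Local Notation x1 X := (X 0 i1).
Local Notation x2 X := (X 0 i2).

Lemma e_coord (k : nat) (j : 'I_3) : e R k 0 j = ((j : nat) == k)%:R.
Proof. by rewrite mxE. Qed.

Lemma mulmx_coord (X : 'rV[R]_3) (D : 'M[R]_3) (k : 'I_3) :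
  (X *m D) 0 k = x0 X * D i0 k + x1 X * D i1 k + x2 X * D i2 k.
Proof. by rewrite mxE big_ord3. Qed.

Lemma g_coord (X Y : 'rV[R]_3) : g X Y = x0 X * x0 Y + x1 X * x1 Y - x2 X * x2 Y.
Proof. by rewrite /g big_ord3 /eps /=; ring. Qed.

Lemma g_e (Z : 'rV[R]_3) (k : 'I_3) : g Z (e R k) = eps R k * Z 0 k.
Proof. by rewrite g_coord !e_coord; have [-> | -> | ->] := ord3P k; rewrite /eps /=; ring. Qed.

Lemma br_coord0 (X Y : 'rV[R]_3) : br a b X Y 0 i0 =
  a * (x0 X * x1 Y - x1 X * x0 Y) - a * (x0 X * x2 Y - x2 X * x0 Y)
  + b * (x1 X * x2 Y - x2 X * x1 Y).
Proof. by rewrite /br !big_ord3 /brb /= !mxE /=; ring. Qed.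

Lemma br_coord1 (X Y : 'rV[R]_3) : br a b X Y 0 i1 =
  - b * (x0 X * x2 Y - x2 X * x0 Y) + a * (x1 X * x2 Y - x2 X * x1 Y).
Proof. by rewrite /br !big_ord3 /brb /= !mxE /=; ring. Qed.

Lemma br_coord2 (X Y : 'rV[R]_3) : br a b X Y 0 i2 =
  - b * (x0 X * x1 Y - x1 X * x0 Y) + a * (x1 X * x2 Y - x2 X * x1 Y).
Proof. by rewrite /br !big_ord3 /brb /= !mxE /=; ring. Qed.

Definition br_coord := (br_coord0, br_coord1, br_coord2).

Lemma nabla_coord (X Y : 'rV[R]_3) (k : 'I_3) : nabla a b X Y 0 k =
  eps R k / 2 * (g (br a b X Y) (e R k) - g (br a b Y (e R k)) X
                 + g (br a b (e R k) X) Y).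
Proof.
rewrite /nabla big_ord3 !mxE.
by have [-> | -> | ->] := ord3P k; rewrite /= ?mulr1n ?mulr0n; ring.
Qed.

Lemma nabla_coord0 (X Y : 'rV[R]_3) : nabla a b X Y 0 i0 =
  a * x0 X * x1 Y - a * x0 X * x2 Y + b / 2 * (x1 X * x2 Y - x2 X * x1 Y).
Proof. by rewrite nabla_coord !g_coord !br_coord !e_coord /eps /=; field. Qed.

Lemma nabla_coord1 (X Y : 'rV[R]_3) : nabla a b X Y 0 i1 =
  - a * x0 X * x0 Y - b / 2 * x0 X * x2 Y + a * x1 X * x2 Y
  + b / 2 * x2 X * x0 Y - a * x2 X * x2 Y.
Proof. by rewrite nabla_coord !g_coord !br_coord !e_coord /eps /=; field. Qed.

Lemma nabla_coord2 (X Y : 'rV[R]_3) : nabla a b X Y 0 i2 =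
  - a * x0 X * x0 Y - b / 2 * x0 X * x1 Y + b / 2 * x1 X * x0 Y
  + a * x1 X * x1 Y - a * x2 X * x1 Y.
Proof. by rewrite nabla_coord !g_coord !br_coord !e_coord /eps /=; field. Qed.

Lemma curv_coord (X Y Z : 'rV[R]_3) (k : 'I_3) : curv a b X Y Z 0 k =
  nabla a b X (nabla a b Y Z) 0 k - nabla a b Y (nabla a b X Z) 0 k
  - nabla a b (br a b X Y) Z 0 k.
Proof. by rewrite !mxE. Qed.

Lemma rho_curv (X Y : 'rV[R]_3) :
  rho a b X Y = - \sum_(k < 3) curv a b X (e R k) Y 0 k.
Proof.
rewrite /rho -sumrN; apply: eq_bigr => k _.
by rewrite g_e mulrA mulNr -expr2 /eps; case: ifP; rewrite ?sqrrN expr1n mulN1r.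
Qed.

Lemma Ric_coord (X : 'rV[R]_3) (k : 'I_3) : Ric a b X 0 k = eps R k * rho a b X (e R k).
Proof.
rewrite /Ric big_ord3 !mxE.
by have [-> | -> | ->] := ord3P k; rewrite /= ?mulr1n ?mulr0n; ring.
Qed.

(* Row [i] holds the coordinates of [Ric e_i], as linear maps act on the right. *)
Definition ricci_mx : 'M[R]_3 := \matrix_(i < 3, j < 3) nth 0 (nth [::]
  [:: [:: - (b ^+ 2 / 2);  - (a * b);                    - (a * b)];
      [:: - (a * b);       - (b ^+ 2 / 2) - 2 * a ^+ 2;  - 2 * a ^+ 2];
      [:: a * b;           2 * a ^+ 2;                   2 * a ^+ 2 - b ^+ 2 / 2]] i) j.

Lemma Ric_ricci_mx (X : 'rV[R]_3) : Ric a b X = X *m ricci_mx.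
Proof.
apply/rowP => k; rewrite Ric_coord rho_curv big_ord3 !curv_coord mulmx_coord !mxE.
by have [-> | -> | ->] := ord3P k;
  rewrite !(nabla_coord0, nabla_coord1, nabla_coord2, br_coord) !e_coord /eps /=; field.
Qed.

Lemma scalE : scal a b = - (3 / 2) * b ^+ 2.
Proof.
rewrite /scal big_ord3 -!Ric_coord !Ric_ricci_mx !mulmx_coord !e_coord !mxE /=.
by field.
Qed.

Lemma is_derivation_ricci_shift (t : R) : a != 0 ->
  is_derivation a b (ricci_mx - t%:M) <-> b = 0 /\ t = 0.
Proof.
move=> a_neq0; split=> [der | [b_eq0 ->] X Y].
  move/rowP: (der (e R 0) (e R 1)) => der01.
  have := der01 i0.
  rewrite [RHS]mxE !mulmx_coord !br_coord !mulmx_coord !e_coord !mxE /= => der0.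
  have := der01 i1.
  rewrite [RHS]mxE !mulmx_coord !br_coord !mulmx_coord !e_coord !mxE /= => der1.
  have b_eq0 : b = 0.
    have : 6 * a ^+ 2 * b = 0 by lra.
    by move/eqP; rewrite !mulf_eq0 (negbTE a_neq0) pnatr_eq0 /= => /eqP.
  have : a * t = 0 by move: der0; rewrite b_eq0; lra.
  by move/eqP; rewrite mulf_eq0 (negbTE a_neq0) => /eqP.
rewrite raddf0 subr0; apply/rowP => k; rewrite [RHS]mxE.
by have [-> | -> | ->] := ord3P k;
  rewrite !mulmx_coord !br_coord !mulmx_coord !mxE /= b_eq0; ring.
Qed.

End G1.

Theorem theorem3p2 (R : realType) (alpha beta lambda0 c : R) :
  alpha != 0 ->
  (alg_schouten_soliton alpha beta lambda0 c <-> (beta = 0 /\ c = 0)).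
Proof.
move=> alpha_neq0.
rewrite (schouten_soliton_iff_derivation _ _ _ lambda0 c (Ric_ricci_mx alpha beta)).
rewrite is_derivation_ricci_shift // scalE.
by split=> -[beta0 hc]; split=> //; rewrite beta0 in hc *; lra.
Qed.
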